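(* Let $K\subset\mathbb{R}^m$ be a convex cone containing the nonnegative orthant $\mathbb{R}^m_+$. For $i\in[m]$ let $C_i=\{c\in K: c_j\ge 0\ \forall j\ne i\}$ and let $C=\sum_{i=1}^m C_i$ (Minkowski sum). Then a vector $c\in\mathbb{R}^m$ having at least one negative entry belongs to $C$ if and only if $c\in\sum_{i: c_i<0} C_i$. *)

(* Vectors of R^m are row vectors 'rV[R]_m, entry j is c ord0 j. *)
From HB Require Import structures.
From mathcomp Require Import all_boot all_order all_algebra.
Set Implicit Arguments. Unset Strict Implicit. Unset Printing Implicit Defensive.
Import Order.TTheory GRing.Theory Num.Theory.
Local Open Scope ring_scope.

Definition is_cone (R : realFieldType) (m : nat) (K : 'rV[R]_m -> Prop) : Prop :=
  forall (l : R) (x : 'rV[R]_m), 0 < l -> K x -> K (l *: x).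

Definition is_convex (R : realFieldType) (m : nat) (K : 'rV[R]_m -> Prop) : Prop :=
  forall (t : R) (x y : 'rV[R]_m), 0 <= t -> t <= 1 -> K x -> K y ->
    K (t *: x + (1 - t) *: y).

Definition is_convex_cone (R : realFieldType) (m : nat) (K : 'rV[R]_m -> Prop) : Prop :=
  is_cone K /\ is_convex K.

Definition nonneg_orthant (R : realFieldType) (m : nat) (c : 'rV[R]_m) : Prop :=
  forall j : 'I_m, 0 <= c ord0 j.

Definition Cset (R : realFieldType) (m : nat) (K : 'rV[R]_m -> Prop) (i : 'I_m)
  (c : 'rV[R]_m) : Prop :=
  K c /\ forall j : 'I_m, j != i -> 0 <= c ord0 j.

(* Minkowski sum  \sum_{i in S} A_i  (the empty sum is {0}) *)
Definition msum (R : realFieldType) (m : nat) (S : pred 'I_m)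
  (A : 'I_m -> 'rV[R]_m -> Prop) (c : 'rV[R]_m) : Prop :=
  exists f : 'I_m -> 'rV[R]_m,
    (forall i, S i -> A i (f i)) /\ c = \sum_(i | S i) f i.

From HB Require Import structures.
From mathcomp Require Import all_boot all_order all_algebra.
From mathcomp Require Import ring.

Set Implicit Arguments.
Unset Strict Implicit.
Unset Printing Implicit Defensive.
Import Order.TTheory GRing.Theory Num.Theory.
Local Open Scope ring_scope.

(* Given c = sum_{i in A} f_i with f_i in C_i, an index k in A with c_k >= 0
   can be dropped: distribute f_k over the other summands, giving f_i a share
   proportional to its (nonnegative) k-th entry. The k-th entry of the new
   i-th summand is then its share of c_k, hence nonnegative, and its other
   entries only grow. Iterating removes every index with c_k >= 0. *)

Lemma eq_msum (R : realFieldType) (m : nat) (S S' : pred 'I_m)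
    {A : 'I_m -> 'rV[R]_m -> Prop} {c : 'rV[R]_m} :
  S =1 S' -> msum S A c <-> msum S' A c.
Proof.
move=> eqS; split=> -[f [Af ->]]; exists f.
  by split=> [i|]; [rewrite -eqS; apply: Af | apply: eq_bigl].
by split=> [i|]; [rewrite eqS; apply: Af | apply/esym/eq_bigl].
Qed.

Lemma msum_subset (R : realFieldType) (m : nat) (S S' : pred 'I_m)
    (A : 'I_m -> 'rV[R]_m -> Prop) (c : 'rV[R]_m) :
  (forall i, A i 0) -> {subset S <= S'} -> msum S A c -> msum S' A c.
Proof.
move=> A0 sSS' [f [Af ->]]; exists (fun i => if S i then f i else 0); split.
  by move=> i _; case: ifP => [/Af|_].
rewrite big_mkcond [RHS]big_mkcond /=; apply: eq_bigr => i _.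
case Si: (S i); last by case: (S' i).
by have -> : S' i := sSS' i Si.
Qed.

Lemma proportional_weights (R : realFieldType) (I : finType) (B : {set I})
    (w : I -> R) (l : I) :
  l \in B -> (forall i, i \in B -> 0 <= w i) ->
  exists a : I -> R, [/\ forall i, i \in B -> 0 <= a i,
    \sum_(i in B) a i = 1 & forall i, i \in B -> w i = a i * \sum_(j in B) w j].
Proof.
move=> lB w_ge0; set s := \sum_(j in B) w j.
have [s_gt0 | s_le0] := ltP 0 s.
  exists (fun i => w i / s); split=> [i iB||i _].
  - by rewrite divr_ge0 ?w_ge0 ?ltW.
  - by rewrite -mulr_suml mulfV ?gt_eqF.
  - by rewrite divfK ?gt_eqF.
have w0 i : i \in B -> w i = 0.
  move=> iB; apply/eqP; rewrite eq_le w_ge0 // andbT.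
  apply: le_trans s_le0; rewrite /s (bigD1 i) //= lerDl.
  by apply: sumr_ge0 => j /andP[jB _]; apply: w_ge0.
exists (fun i => (i == l)%:R); split=> [i _||i iB].
- exact: ler0n.
- by rewrite (bigD1 l) //= eqxx big1 ?addr0 // => i /andP[_ /negbTE ->].
- by rewrite w0 // /s big1 ?mulr0.
Qed.

Section ConvexCone.
Variables (R : realFieldType) (m : nat) (K : 'rV[R]_m -> Prop).
Hypothesis hK : is_convex_cone K.
Hypothesis horth : forall c : 'rV[R]_m, nonneg_orthant c -> K c.

Lemma convex_cone_add x y : K x -> K y -> K (x + y).
Proof.
case: hK => Kcone Kconvex Kx Ky.
have half_ge0 : (0 : R) <= 2^-1 by rewrite invr_ge0 ler0n.
have half_le1 : (2 : R)^-1 <= 1 by rewrite invf_le1 ?ler1n.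
have two_gt0 : (0 : R) < 2 by [].
have := Kcone 2 _ two_gt0 (Kconvex _ _ _ half_ge0 half_le1 Kx Ky).
have -> : 1 - 2^-1 = 2^-1 :> R by field.
by rewrite scalerDr !scalerA mulfV ?pnatr_eq0 // !scale1r.
Qed.

Lemma cone0 : K 0.
Proof. by apply: horth => j; rewrite mxE. Qed.

Lemma cone_scale a x : 0 <= a -> K x -> K (a *: x).
Proof.
rewrite le_eqVlt => /predU1P[<- _|a_gt0 Kx]; first by rewrite scale0r; apply: cone0.
by case: hK => Kcone _; apply: Kcone.
Qed.

Lemma Cset0 i : Cset K i 0.
Proof. by split=> [|j _]; [apply: cone0 | rewrite mxE]. Qed.

Lemma msum_setD1 (c : 'rV[R]_m) (A : {set 'I_m}) (k l : 'I_m) :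
  k \in A -> l \in A :\ k -> 0 <= c ord0 k ->
  msum (mem A) (Cset K) c -> msum (mem (A :\ k)) (Cset K) c.
Proof.
move=> kA lAk ck_ge0 [f [Cf cE]].
set B := A :\ k.
have kth_ge0 i : i \in B -> 0 <= f i ord0 k.
  by case/setD1P=> ik iA; case: (Cf i iA) => _; apply; rewrite eq_sym.
have [a [a_ge0 a_sum1 share]] := proportional_weights lAk kth_ge0.
have ck : c ord0 k = f k ord0 k + \sum_(i in B) f i ord0 k.
  by rewrite cE summxE (big_setD1 k).
exists (fun i => f i + a i *: f k); split.
  move=> i iB; have iA : i \in A by case/setD1P: iB.
  case: (Cf i iA) => Kfi fi_ge0; case: (Cf k kA) => Kfk fk_ge0.
  split; first by apply: convex_cone_add => //; apply: cone_scale => //; apply: a_ge0.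
  move=> j ji; rewrite !mxE; have [-> | jk] := eqVneq j k.
    by rewrite share // -mulrDr addrC -ck mulr_ge0 ?a_ge0.
  by rewrite addr_ge0 ?fi_ge0 ?mulr_ge0 ?a_ge0 ?fk_ge0.
rewrite big_split /= -scaler_suml a_sum1 scale1r cE (big_setD1 k) //= addrC.
by congr (_ + _); apply: eq_bigl => i; rewrite !inE.
Qed.

Lemma msum_shrink (c : 'rV[R]_m) (N A : {set 'I_m}) :
  N != set0 -> (forall k, k \notin N -> 0 <= c ord0 k) -> N \subset A ->
  msum (mem A) (Cset K) c -> msum (mem N) (Cset K) c.
Proof.
case/set0Pn=> l lN c_ge0; have [n] := ubnP #|A|.
elim: n A => // n IH A /ltnSE leAn NA cA.
have [AN | [k /setDP[kA kN]]] := set_0Vmem (A :\: N).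
  suff -> : N = A by [].
  by apply/eqP; rewrite eqEsubset NA -setD_eq0 AN eqxx.
have NAk : N \subset A :\ k.
  apply/subsetP=> i iN; rewrite !inE (subsetP NA) // andbT.
  by apply: contraNneq kN => <-.
apply: (IH (A :\ k)) => //.
  by apply: leq_trans leAn; rewrite (cardsD1 k A) kA.
by apply: (msum_setD1 kA (subsetP NAk l lN)) => //; apply: c_ge0.
Qed.

End ConvexCone.

Theorem mainTheorem5 (R : realFieldType) (m : nat) (K : 'rV[R]_m -> Prop)
  (hK : is_convex_cone K)
  (horth : forall c : 'rV[R]_m, nonneg_orthant c -> K c)
  (c : 'rV[R]_m) (hneg : exists j : 'I_m, c ord0 j < 0) :
  msum (fun _ => true) (Cset K) c <-> msum (fun i => c ord0 i < 0) (Cset K) c.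
Proof.
set N := [set i | c ord0 i < 0].
have memT : (fun _ => true) =1 mem [set: 'I_m] by move=> i /=; rewrite in_setT.
have memN : mem N =1 (fun i => c ord0 i < 0) by move=> i /=; rewrite inE.
split=> [/(eq_msum memT) cT | /(eq_msum memN) cN]; last first.
  by apply/(eq_msum memT); apply: msum_subset (Cset0 horth) _ cN => i _.
apply/(eq_msum memN); apply: (msum_shrink hK horth _ _ (subsetT N) cT).
  by case: hneg => j cj; apply/set0Pn; exists j; rewrite /N inE.
by move=> k; rewrite inE -leNgt.
Qed.
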